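(* $\mathcal{N}_{\mathbb{M}^{\mathrm{Club}}_\kappa}=\mathcal{I}_{\mathbb{M}^{\mathrm{Club}}_\kappa}$.
   Context: $\kappa$ is an uncountable regular cardinal with $\kappa=2^{<\kappa}$. $\mathbb{M}^{\mathrm{Club}}_\kappa$ consists of pruned $<\kappa$-closed trees $p\subseteq\kappa^{<\kappa}$, ordered by inclusion, such that every $s\in p$ has an extension $t\in p$ with $\mathrm{succ}(t,p)=\{\alpha<\kappa: t^\frown\alpha\in p\}$ club in $\kappa$ (such $t$ is club-splitting; $t^\frown\alpha$ is $t$ extended by $\alpha$), and for every branch $x\in[p]$ the set $\{\alpha<\kappa: x\restriction\alpha \text{ is club-splitting}\}$ is club. For a tree-forcing $\mathbb{P}$, $\mathcal{N}_\mathbb{P}$ is the family of $\mathbb{P}$-nowhere dense sets ($X$ such that every $p$ has $q\leq p$ with $[q]\cap X=\emptyset$) and $\mathcal{I}_\mathbb{P}$ the family of sets covered by $\kappa$ many $\mathbb{P}$-nowhere dense sets. *)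

(* kappa is modelled as a type K with a strict well-order lt
   of order type kappa; elements of K are the ordinals < kappa. *)
From Stdlib Require Import Wellfounded.

Section ClubMiller.
Variable K : Type.
Variable lt : K -> K -> Prop.

Definition le (a b : K) : Prop := a = b \/ lt a b.

Definition is_wellorder : Prop :=
  (forall a, ~ lt a a) /\
  (forall a b c, lt a b -> lt b c -> lt a c) /\
  (forall a b, lt a b \/ a = b \/ lt b a) /\
  well_founded lt.

Definition seg (a : K) : Type := {b : K | lt b a}.

(* the order type of K is a cardinal: no proper initial segment is
   equinumerous with K (no injection of K into a proper initial segment) *)
Definition is_cardinal_type : Prop :=
  forall (a : K) (f : K -> seg a), ~ (forall x y, f x = f y -> x = y).

Definition is_uncountable : Prop :=
  forall f : K -> nat, ~ (forall x y, f x = f y -> x = y).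

Definition is_regular : Prop :=
  forall (a : K) (f : seg a -> K), exists c, forall b, lt (f b) c.

Definition two_lt_kappa_eq_kappa : Prop :=
  forall a : K, exists g : (seg a -> bool) -> K, forall u v, g u = g v -> u = v.

(* kappa^{<kappa}: sequences s of length len s < kappa with values in kappa;
   vals s b = Some (s(b)) for b < len s and None otherwise *)
Record node : Type := Node {
  len : K;
  vals : K -> option K;
  vals_dom : forall b, lt b len <-> vals b <> None }.

Definition prefix (s t : node) : Prop :=
  le (len s) (len t) /\ forall b, lt b (len s) -> vals s b = vals t b.

Definition is_restr (x : K -> K) (a : K) (u : node) : Prop :=
  len u = a /\ forall b, lt b a -> vals u b = Some (x b).

Definition is_succ (a b : K) : Prop := lt a b /\ forall c, lt a c -> le b c.

Definition is_ext (t : node) (al : K) (u : node) : Prop :=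
  is_succ (len t) (len u) /\ prefix t u /\ vals u (len t) = Some al.

Definition succ_set (p : node -> Prop) (t : node) : K -> Prop :=
  fun al => exists u, p u /\ is_ext t al u.

Definition club (C : K -> Prop) : Prop :=
  (forall a, exists b, le a b /\ C b) /\
  (forall a, (exists b, lt b a) ->
     (forall b, lt b a -> exists c, lt b c /\ lt c a /\ C c) -> C a).

Definition is_tree (p : node -> Prop) : Prop :=
  (exists s, p s) /\ (forall s t, prefix s t -> p t -> p s).

Definition pruned (p : node -> Prop) : Prop :=
  forall s, p s -> exists t, p t /\ prefix s t /\ len s <> len t.

Definition is_union (a : K) (c : K -> node) (u : node) : Prop :=
  (forall b, lt b a -> prefix (c b) u) /\
  (forall d, lt d (len u) -> exists b, lt b a /\ lt d (len (c b))).

Definition lt_kappa_closed (p : node -> Prop) : Prop :=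
  forall (a : K) (c : K -> node),
    (forall b, lt b a -> p (c b)) ->
    (forall b b', lt b b' -> lt b' a -> prefix (c b) (c b')) ->
    forall u, is_union a c u -> p u.

Definition club_splitting (p : node -> Prop) (t : node) : Prop :=
  club (succ_set p t).

Definition branch (p : node -> Prop) (x : K -> K) : Prop :=
  forall a, exists u, p u /\ is_restr x a u.

Definition is_club_miller (p : node -> Prop) : Prop :=
  is_tree p /\ pruned p /\ lt_kappa_closed p /\
  (forall s, p s -> exists t, p t /\ prefix s t /\ club_splitting p t) /\
  (forall x, branch p x ->
     club (fun a => exists u, is_restr x a u /\ club_splitting p u)).

Definition nowhere_dense (X : (K -> K) -> Prop) : Prop :=
  forall p, is_club_miller p ->
    exists q, is_club_miller q /\ (forall s, q s -> p s) /\
      (forall x, branch q x -> ~ X x).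

Definition in_ideal (X : (K -> K) -> Prop) : Prop :=
  exists F : K -> (K -> K) -> Prop,
    (forall a, nowhere_dense (F a)) /\ (forall x, X x -> exists a, F a x).

End ClubMiller.

From Pilot Require Import Defs.
From Stdlib Require Import Classical ClassicalEpsilon FunctionalExtensionality.
From Stdlib Require Import ProofIrrelevance PropExtensionality.

(* Given nowhere dense sets F_b (b < kappa) and a condition p, build along every
   x in kappa^kappa a decreasing sequence of conditions Phi_x(a) below p: at
   stage b+1 shrink Phi_x(b) to a condition that still contains x|(b+1) and
   whose branches avoid F_b, at limit stages intersect.  Since Phi_x(a) only
   depends on x|a, the nodes s with s in Phi_s(len s) form a tree q, and every
   branch x of q runs through all the Phi_x(a), hence avoids every F_b.

   To see that q is a condition one works with normal conditions, in which
   every node either club-splits or has exactly one successor.  Splitting then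
   passes from a normal condition to any larger one, the intersection of a
   decreasing chain of fewer than kappa normal conditions is a normal
   condition, and along a branch of q the splitting levels form a club by a
   diagonal-intersection argument. *)

Section ClubMillerFusion.
Variable K : Type.
Variable lt : K -> K -> Prop.
Hypothesis Hwo : is_wellorder K lt.
Hypothesis Hunc : is_uncountable K.
Hypothesis Hreg : is_regular K lt.

Notation le := (Defs.le K lt).
Notation node := (Defs.node K lt).
Notation len := (Defs.len K lt).
Notation vals := (Defs.vals K lt).
Notation prefix := (Defs.prefix K lt).
Notation club := (Defs.club K lt).
Notation is_tree := (Defs.is_tree K lt).
Notation cond := (is_club_miller K lt).

Lemma lt_irrefl a : ~ lt a a.
Proof. apply Hwo. Qed.

Lemma lt_trans a b c : lt a b -> lt b c -> lt a c.
Proof. apply Hwo. Qed.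

Lemma lt_trichotomy a b : lt a b \/ a = b \/ lt b a.
Proof. apply Hwo. Qed.

Lemma lt_wf : well_founded lt.
Proof. apply Hwo. Qed.

Lemma lt_asym a b : lt a b -> ~ lt b a.
Proof. intros Hab Hba. apply (lt_irrefl a). eapply lt_trans; eauto. Qed.

Lemma lt_neq a b : lt a b -> a <> b.
Proof. intros H ->. exact (lt_irrefl b H). Qed.

Lemma le_refl a : le a a.
Proof. now left. Qed.

Lemma lt_le_incl a b : lt a b -> le a b.
Proof. now right. Qed.

Lemma le_trans a b c : le a b -> le b c -> le a c.
Proof. unfold Defs.le. intros [->|H1] [->|H2]; auto. right; eapply lt_trans; eauto. Qed.

Lemma le_lt_trans a b c : le a b -> lt b c -> lt a c.
Proof. intros [->|H] H2; auto. eapply lt_trans; eauto. Qed.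

Lemma lt_le_trans a b c : lt a b -> le b c -> lt a c.
Proof. intros H [->|H2]; auto. eapply lt_trans; eauto. Qed.

Lemma not_lt_le a b : ~ lt a b -> le b a.
Proof. intros H. destruct (lt_trichotomy a b) as [h|[->|h]]; [tauto|left|right]; auto. Qed.

Lemma le_not_lt a b : le a b -> ~ lt b a.
Proof. intros [->|H]; [apply lt_irrefl|now apply lt_asym]. Qed.

Lemma le_antisym a b : le a b -> le b a -> a = b.
Proof. intros [->|H] H2; auto. exfalso; exact (le_not_lt _ _ H2 H). Qed.

Lemma le_max a b : exists m, le a m /\ le b m /\ (m = a \/ m = b).
Proof.
  destruct (lt_trichotomy a b) as [h|[->|h]].
  - exists b. auto using lt_le_incl, le_refl.
  - exists b. auto using le_refl.
  - exists a. auto using lt_le_incl, le_refl.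
Qed.

Definition ltdec (b a : K) : {lt b a} + {~ lt b a} := excluded_middle_informative _.

Lemma K_inhabited : inhabited K.
Proof.
  apply NNPP; intro H. apply (Hunc (fun _ => 0)). intros x. exfalso; apply H; now constructor.
Qed.

Definition eps (P : K -> Prop) : K := epsilon K_inhabited P.

Lemma eps_spec (P : K -> Prop) : (exists x, P x) -> P (eps P).
Proof. apply epsilon_spec. Qed.

Lemma least_exists (P : K -> Prop) : (exists a, P a) -> exists a, P a /\ forall b, P b -> le a b.
Proof.
  intros [a Ha]. induction a as [a IH] using (well_founded_ind lt_wf).
  destruct (classic (exists b, P b /\ lt b a)) as [[b [Hb Hba]]|Hn].
  - exact (IH b Hba Hb).
  - exists a. split; auto. intros b Hb. apply not_lt_le. intro. apply Hn; eauto.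
Qed.

Definition zero : K := eps (fun a => forall b, le a b).

Lemma zero_le b : le zero b.
Proof.
  revert b. apply (eps_spec (fun a => forall b, le a b)). destruct K_inhabited as [k].
  destruct (least_exists (fun _ => True)) as [a [_ Ha]]; eauto.
Qed.

Lemma not_lt_zero b : ~ lt b zero.
Proof. apply le_not_lt, zero_le. Qed.

Lemma exists_gt a : exists b, lt a b.
Proof.
  destruct (classic (exists c, lt c a)) as [[c Hc]|Hn].
  - destruct (Hreg a (fun _ => a)) as [d Hd]. exists d. exact (Hd (exist _ c Hc)).
  - (* otherwise K = {a} would be countable *)
    apply NNPP; intro H2. apply (Hunc (fun _ => 0)). intros x y _.
    assert (Hall : forall w, w = a).
    { intro w. destruct (lt_trichotomy w a) as [h|[h|h]]; auto; exfalso; eauto. }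
    now rewrite (Hall x), (Hall y).
Qed.

Definition succ (a : K) : K := eps (is_succ K lt a).

Lemma succ_spec a : is_succ K lt a (succ a).
Proof.
  apply (eps_spec (is_succ K lt a)).
  destruct (least_exists (lt a) (exists_gt a)) as [b [Hb Hl]]. now exists b.
Qed.

Lemma lt_succ a : lt a (succ a).
Proof. apply succ_spec. Qed.

Lemma succ_least a c : lt a c -> le (succ a) c.
Proof. apply succ_spec. Qed.

Lemma is_succ_succ a b : is_succ K lt a b -> b = succ a.
Proof.
  intros [H1 H2]. apply le_antisym; [apply H2, lt_succ | now apply succ_least].
Qed.

Lemma lt_succ_le a c : lt c (succ a) -> le c a.
Proof. intros H. apply not_lt_le. intro H2. exact (le_not_lt _ _ (succ_least _ _ H2) H). Qed.

Lemma succ_lt_succ a b : lt a b -> lt (succ a) (succ b).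
Proof. intros H. eapply le_lt_trans; [apply succ_least, H | apply lt_succ]. Qed.

Lemma succ_inj a b : succ a = succ b -> a = b.
Proof.
  intros E. destruct (lt_trichotomy a b) as [h|[h|h]]; auto;
    apply succ_lt_succ in h; rewrite E in h; now apply lt_irrefl in h.
Qed.

Lemma succ_neq (a : K) : a <> succ a.
Proof. apply lt_neq, lt_succ. Qed.

(* Zero counts as a limit. *)
Definition is_limit (a : K) : Prop := forall b, lt b a -> lt (succ b) a.

Lemma succ_or_limit a : (exists b, a = succ b) \/ is_limit a.
Proof.
  destruct (classic (exists b, lt b a /\ ~ lt (succ b) a)) as [[b [H1 H2]]|H].
  - left. exists b. apply le_antisym; [now apply not_lt_le | now apply succ_least].
  - right. intros b Hb. apply NNPP; intro; apply H; eauto.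
Qed.

Lemma succ_not_limit b : ~ is_limit (succ b).
Proof. intros H. exact (lt_irrefl _ (H b (lt_succ b))). Qed.

Fixpoint fin (n : nat) : K := match n with O => zero | S m => succ (fin m) end.

Lemma fin_lt n m : (n < m)%nat -> lt (fin n) (fin m).
Proof. induction 1; [|eapply lt_trans; eauto]; apply lt_succ. Qed.

Lemma fin_inj n m : fin n = fin m -> n = m.
Proof.
  intros H. destruct (PeanoNat.Nat.lt_trichotomy n m) as [h|[h|h]]; auto;
    apply fin_lt in h; rewrite H in h; now apply lt_irrefl in h.
Qed.

Lemma below_fin w n : le w (fin n) -> exists m, w = fin m.
Proof.
  revert w. induction n as [|n IH]; intros w Hw.
  - exists O. apply le_antisym; [exact Hw | apply zero_le].
  - destruct Hw as [->|Hw]; [now exists (S n)|]. apply IH, lt_succ_le, Hw.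
Qed.

Lemma fin_bounded : exists w, forall n, lt (fin n) w.
Proof.
  apply NNPP; intro H.
  assert (Hall : forall w, exists m, w = fin m).
  { intro w. apply NNPP; intro Hw. apply H. exists w. intro n. apply NNPP; intro Hn.
    apply Hw, (below_fin w n), not_lt_le, Hn. }
  apply (Hunc (fun w => proj1_sig (constructive_indefinite_description _ (Hall w)))).
  intros x y E.
  destruct (constructive_indefinite_description _ (Hall x)) as [m1 H1].
  destruct (constructive_indefinite_description _ (Hall y)) as [m2 H2].
  simpl in E. congruence.
Qed.

Lemma seg_bounded (a : K) (f : K -> K) : exists c, forall b, lt b a -> lt (f b) c.
Proof.
  destruct (Hreg a (fun b => f (proj1_sig b))) as [c Hc]. exists c.
  intros b Hb. exact (Hc (exist _ b Hb)).
Qed.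

(* omega is the least bound of the fin n, and kappa > omega is regular. *)
Lemma countable_bounded (d : nat -> K) : exists c, forall n, lt (d n) c.
Proof.
  destruct (least_exists _ fin_bounded) as [w [Hw Hleast]].
  assert (Hfin : forall k, lt k w -> exists n, k = fin n).
  { intros k Hk. apply NNPP; intro H.
    assert (Hk' : forall n, lt (fin n) k).
    { induction n as [|n IH].
      - destruct (zero_le k) as [E|E]; auto. exfalso; apply H; now exists O.
      - destruct (succ_least _ _ IH) as [E|E]; auto. exfalso; apply H; now exists (S n). }
    exact (le_not_lt _ _ (Hleast k Hk') Hk). }
  pose (f := fun b => match ltdec b w with
                      | left h => d (proj1_sig (constructive_indefinite_description _ (Hfin b h)))
                      | right _ => b end).
  destruct (seg_bounded w f) as [c Hc]. exists c. intro n.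
  specialize (Hc (fin n) (Hw n)). unfold f in Hc. destruct (ltdec (fin n) w) as [h|h]; [|contradiction (h (Hw n))].
  destruct (constructive_indefinite_description _ _) as [m Hm]. simpl in Hc.
  now rewrite (fin_inj _ _ Hm).
Qed.

(** * Clubs *)

Definition is_iter_sup (f : K -> K) (a0 L : K) : Prop :=
  (forall n, lt (Nat.iter n f a0) L) /\
  (forall b, lt b L -> exists n, le b (Nat.iter n f a0)).

Lemma iter_sup_exists (f : K -> K) (a0 : K) : exists L, is_iter_sup f a0 L.
Proof.
  destruct (least_exists _ (countable_bounded (fun n => Nat.iter n f a0))) as [L [HL Hleast]].
  exists L. split; auto. intros b Hb. apply NNPP; intro Hn.
  apply (le_not_lt L b); [apply Hleast; intro n | exact Hb].
  apply NNPP; intro h. apply Hn. exists n. now apply not_lt_le.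
Qed.

Lemma iter_sup_gt f a0 L : is_iter_sup f a0 L -> lt a0 L.
Proof. intros [HL _]. exact (HL O). Qed.

Lemma iter_sup_limit f a0 L : (forall c, lt c (f c)) -> is_iter_sup f a0 L -> is_limit L.
Proof.
  intros Hf [HL Hcof] b Hb. destruct (Hcof b Hb) as [n Hn].
  eapply le_lt_trans; [apply succ_least | exact (HL (S n))].
  eapply le_lt_trans; [exact Hn | apply Hf].
Qed.

Lemma cofinal_limit (P : K -> Prop) L :
  (forall b, lt b L -> exists c, lt b c /\ lt c L /\ P c) -> is_limit L.
Proof.
  intros H b Hb. destruct (H b Hb) as [c [H1 [H2 _]]].
  eapply le_lt_trans; [apply succ_least, H1 | exact H2].
Qed.

Lemma club_ext (C D : K -> Prop) : (forall a, C a <-> D a) -> club C -> club D.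
Proof.
  intros E [Hunb Hcl]. split.
  - intros a. destruct (Hunb a) as [b [Hb Cb]]. exists b. split; auto. now apply E.
  - intros a Ha Hc. apply E, Hcl; auto. intros b Hb.
    destruct (Hc b Hb) as [c [? [? ?]]]. exists c. repeat split; auto. now apply E.
Qed.

Lemma club_gt (C : K -> Prop) a : club C -> exists b, lt a b /\ C b.
Proof.
  intros [Hunb _]. destruct (Hunb (succ a)) as [b [Hb Cb]].
  exists b. split; auto. eapply lt_le_trans; [apply lt_succ | exact Hb].
Qed.

Lemma club_not_subsingleton (C : K -> Prop) : club C -> ~ (forall a b, C a -> C b -> a = b).
Proof.
  intros HC Huniq. destruct (club_gt C zero HC) as [a [_ Ha]].
  destruct (club_gt C a HC) as [b [Hab Hb]]. exact (lt_neq _ _ Hab (Huniq a b Ha Hb)).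
Qed.

Lemma club_tail a : club (fun c => le a c).
Proof.
  split.
  - intros a0. destruct (le_max a0 a) as [m [H1 [H2 _]]]. eauto.
  - intros c [b Hb] H. destruct (H b Hb) as [e [_ [Hec He]]].
    apply lt_le_incl. eapply le_lt_trans; eauto.
Qed.

Definition next_in (C : K -> Prop) (c : K) : K := eps (fun e => lt c e /\ C e).

Lemma next_in_spec C c : club C -> lt c (next_in C c) /\ C (next_in C c).
Proof. intros HC. apply (eps_spec (fun e => lt c e /\ C e)), club_gt, HC. Qed.

Lemma club_iter_sup (C : K -> Prop) (f : K -> K) (a0 c0 L : K) :
  club C -> lt c0 L -> (forall c, le c0 c -> exists e, lt c e /\ le e (f c) /\ C e) ->
  is_iter_sup f a0 L -> C L.
Proof.
  intros [_ Hcl] Hc0 Hf [HL Hcof]. apply Hcl; [eauto|]. intros b Hb.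
  destruct (le_max b c0) as [m [Hbm [Hcm Hm]]].
  assert (HmL : lt m L) by (destruct Hm as [-> | ->]; auto).
  destruct (Hcof m HmL) as [n Hn].
  destruct (Hf (Nat.iter n f a0)) as [e [He1 [He2 He]]]; [eapply le_trans; eauto|].
  exists e. repeat split; auto.
  - eapply le_lt_trans; [eapply le_trans; eauto | exact He1].
  - eapply le_lt_trans; [exact He2 | exact (HL (S n))].
Qed.

Lemma club_inter (a : K) (C0 : K -> Prop) (C : K -> K -> Prop) :
  club C0 -> (forall b, lt b a -> club (C b)) ->
  club (fun c => C0 c /\ forall b, lt b a -> C b c).
Proof.
  intros H0 HC. split.
  - intros a0.
    pose (bound := fun c c' => le (next_in C0 c) c' /\
                               forall b, lt b a -> le (next_in (C b) c) c').
    pose (f := fun c => eps (bound c)).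
    assert (Hf : forall c, bound c (f c)).
    { intros c. apply (eps_spec (bound c)).
      destruct (seg_bounded a (fun b => next_in (C b) c)) as [c1 Hc1].
      destruct (le_max c1 (next_in C0 c)) as [m [H1 [H2 _]]].
      exists m. split; auto. intros b Hb. apply lt_le_incl. eapply lt_le_trans; eauto. }
    destruct (iter_sup_exists f a0) as [L HL].
    exists L. split; [apply lt_le_incl; eapply iter_sup_gt; eauto|]. split.
    + apply (club_iter_sup C0 f a0 a0 L); auto; [eapply iter_sup_gt; eauto|].
      intros c _. destruct (next_in_spec C0 c H0). exists (next_in C0 c).
      repeat split; auto. apply Hf.
    + intros b Hb. apply (club_iter_sup (C b) f a0 a0 L); auto; [eapply iter_sup_gt; eauto|].
      intros c _. destruct (next_in_spec (C b) c (HC b Hb)). exists (next_in (C b) c).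
      repeat split; auto. now apply Hf.
  - intros c Hc Hcl. split.
    + apply H0; auto. intros b Hb. destruct (Hcl b Hb) as [e [? [? [? ?]]]]. eauto.
    + intros b Hb. apply (HC b Hb); auto. intros b' Hb'.
      destruct (Hcl b' Hb') as [e [? [? [? ?]]]]. eauto.
Qed.

Lemma club_inter2 (C D : K -> Prop) : club C -> club D -> club (fun c => C c /\ D c).
Proof.
  intros HC HD. apply (club_ext (fun c => C c /\ forall b, lt b (succ zero) -> D c)).
  - intros c. split; [intros [h1 h2]; split; auto; apply (h2 zero), lt_succ | firstorder].
  - now apply club_inter.
Qed.

Lemma node_ext (s t : node) : len s = len t -> (forall b, vals s b = vals t b) -> s = t.
Proof.
  destruct s as [l1 v1 d1], t as [l2 v2 d2]; simpl; intros E H. subst l2.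
  assert (v1 = v2) by (apply functional_extensionality; auto). subst v2.
  f_equal. apply proof_irrelevance.
Qed.

Definition restr (x : K -> K) (a : K) : node.
Proof.
  refine (Node K lt a (fun b => if ltdec b a then Some (x b) else None) _).
  intro b; destruct (ltdec b a); split; intros; try congruence; tauto.
Defined.

Lemma len_restr x a : len (restr x a) = a.
Proof. reflexivity. Qed.

Lemma vals_restr_lt x a b : lt b a -> vals (restr x a) b = Some (x b).
Proof. intros H; simpl; destruct (ltdec b a); tauto. Qed.

Lemma vals_restr_ge x a b : ~ lt b a -> vals (restr x a) b = None.
Proof. intros H; simpl; destruct (ltdec b a); tauto. Qed.

Lemma restr_congr x y a : (forall b, lt b a -> x b = y b) -> restr x a = restr y a.
Proof.
  intros H. apply node_ext; auto. intros b; simpl. destruct (ltdec b a); auto. now rewrite H.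
Qed.

Definition to_fun (s : node) (b : K) : K :=
  match vals s b with Some v => v | None => zero end.

Lemma vals_lt (s : node) b : lt b (len s) -> vals s b = Some (to_fun s b).
Proof.
  intros H. unfold to_fun. apply (vals_dom K lt s b) in H. destruct (vals s b); congruence.
Qed.

Lemma vals_ge (s : node) b : ~ lt b (len s) -> vals s b = None.
Proof.
  intros H. destruct (vals s b) eqn:E; auto. exfalso; apply H, (vals_dom K lt s b). congruence.
Qed.

Lemma restr_to_fun (s : node) : restr (to_fun s) (len s) = s.
Proof.
  apply node_ext; auto. intros b. destruct (ltdec b (len s)).
  - rewrite vals_restr_lt, vals_lt; auto.
  - rewrite vals_restr_ge, vals_ge; auto.
Qed.

Lemma node_restr (s : node) : exists x, s = restr x (len s).
Proof. exists (to_fun s). symmetry; apply restr_to_fun. Qed.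

Lemma node_restr_ind (P : node -> Prop) : (forall x a, P (restr x a)) -> forall s, P s.
Proof. intros H s. rewrite <- (restr_to_fun s). apply H. Qed.

Lemma to_fun_restr x a c : lt c a -> to_fun (restr x a) c = x c.
Proof. intros H. unfold to_fun. now rewrite vals_restr_lt. Qed.

Lemma is_restr_iff x a u : is_restr K lt x a u <-> u = restr x a.
Proof.
  split.
  - intros [H1 H2]. subst a. apply node_ext; auto. intros b. destruct (ltdec b (len u)).
    + rewrite vals_restr_lt; auto.
    + rewrite vals_restr_ge, vals_ge; auto.
  - intros ->. split; auto. intros; now apply vals_restr_lt.
Qed.

Lemma prefix_refl (s : node) : prefix s s.
Proof. split; [apply le_refl | auto]. Qed.

Lemma prefix_trans (s t u : node) : prefix s t -> prefix t u -> prefix s u.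
Proof.
  intros [H1 H2] [H3 H4]. split; [eapply le_trans; eauto|].
  intros b Hb. rewrite H2, H4; auto. eapply lt_le_trans; eauto.
Qed.

Lemma prefix_len_eq (s t : node) : prefix s t -> len s = len t -> s = t.
Proof.
  intros [_ H] E. apply node_ext; auto. intros b. destruct (ltdec b (len s)); auto.
  rewrite !vals_ge; auto. now rewrite <- E.
Qed.

Lemma comparable_len_eq (s t : node) : prefix s t \/ prefix t s -> len s = len t -> s = t.
Proof. intros [H|H] E; [|symmetry]; apply prefix_len_eq; auto. Qed.

Lemma prefix_total (s t u : node) : prefix s u -> prefix t u -> prefix s t \/ prefix t s.
Proof.
  intros [H1 H2] [H3 H4].
  destruct (lt_trichotomy (len s) (len t)) as [h|[h|h]].
  - left. split; [now right|]. intros b Hb. rewrite H2, H4; eauto using lt_trans.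
  - left. split; [now left|]. intros b Hb. rewrite H2, H4; auto. now rewrite <- h.
  - right. split; [now right|]. intros b Hb. rewrite H2, H4; eauto using lt_trans.
Qed.

Lemma prefix_restr x a b : le a b -> prefix (restr x a) (restr x b).
Proof.
  intros H. split; auto. intros c Hc. rewrite !vals_restr_lt; auto. eapply lt_le_trans; eauto.
Qed.

Lemma prefix_restr_iff (s : node) x b :
  prefix s (restr x b) <-> le (len s) b /\ s = restr x (len s).
Proof.
  split.
  - intros [H1 H2]. split; auto. apply node_ext; auto. intros c. destruct (ltdec c (len s)).
    + rewrite H2, !vals_restr_lt; auto. eapply lt_le_trans; eauto.
    + rewrite vals_restr_ge, vals_ge; auto.
  - intros [H1 ->]. now apply prefix_restr.
Qed.

Lemma restr_to_fun_restr x a b : le a b -> restr (to_fun (restr x b)) a = restr x a.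
Proof.
  intros H. apply restr_congr. intros c Hc. apply to_fun_restr. eapply lt_le_trans; eauto.
Qed.

Definition upd (x : K -> K) (a g : K) (b : K) : K := if ltdec b a then x b else g.

Definition snoc (s : node) (g : K) : node := restr (upd (to_fun s) (len s) g) (succ (len s)).

Lemma len_snoc s g : len (snoc s g) = succ (len s).
Proof. reflexivity. Qed.

Lemma len_snoc_neq s g : len s <> len (snoc s g).
Proof. apply succ_neq. Qed.

Lemma restr_upd x a g c : le c a -> restr (upd x a g) c = restr x c.
Proof.
  intros Hc. apply restr_congr. intros b Hb. unfold upd.
  destruct (ltdec b a) as [|h]; [easy | contradiction (h (lt_le_trans _ _ _ Hb Hc))].
Qed.

Lemma snoc_restr x a g : snoc (restr x a) g = restr (upd x a g) (succ a).
Proof.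
  apply restr_congr. intros b Hb. unfold upd. change (len (restr x a)) with a.
  destruct (ltdec b a); auto. now apply to_fun_restr.
Qed.

Lemma snoc_restr_self x a : snoc (restr x a) (x a) = restr x (succ a).
Proof.
  rewrite snoc_restr. apply restr_congr. intros b Hb. unfold upd. destruct (ltdec b a); auto.
  destruct (lt_succ_le _ _ Hb) as [->|]; tauto.
Qed.

Lemma prefix_snoc t g : prefix t (snoc t g).
Proof.
  destruct (node_restr t) as [x Ht]. rewrite Ht, snoc_restr.
  rewrite <- (restr_upd x (len t) g (len t) (le_refl _)) at 1. apply prefix_restr, lt_le_incl, lt_succ.
Qed.

Lemma vals_snoc t g : vals (snoc t g) (len t) = Some g.
Proof.
  unfold snoc. rewrite vals_restr_lt by apply lt_succ. unfold upd.
  destruct (ltdec (len t) (len t)) as [h|]; [now apply lt_irrefl in h | easy].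
Qed.

Lemma snoc_prefix_vals t g s : prefix (snoc t g) s -> vals s (len t) = Some g.
Proof.
  intros [_ H]. rewrite <- H by (rewrite len_snoc; apply lt_succ). apply vals_snoc.
Qed.

Lemma is_ext_iff t g u : is_ext K lt t g u <-> u = snoc t g.
Proof.
  split.
  - intros [Hsucc [Hpre Hg]]. apply is_succ_succ in Hsucc.
    rewrite <- (restr_to_fun u), Hsucc. apply restr_congr. intros b Hb. unfold upd.
    destruct (ltdec b (len t)) as [h|h].
    + unfold to_fun. now rewrite <- (proj2 Hpre b h).
    + destruct (lt_succ_le _ _ Hb) as [->|]; [|tauto]. unfold to_fun. now rewrite Hg.
  - intros ->. split; [rewrite len_snoc; apply succ_spec|].
    split; [apply prefix_snoc | apply vals_snoc].
Qed.

Lemma succ_set_iff p t g : succ_set K lt p t g <-> p (snoc t g).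
Proof.
  split.
  - intros [u [Hu He]]. apply is_ext_iff in He. now subst.
  - intros H. exists (snoc t g). split; auto. now apply is_ext_iff.
Qed.

Definition root : node := restr (fun _ => zero) zero.

Lemma prefix_root t : prefix root t.
Proof. split; [apply zero_le|]. intros b Hb. exfalso; exact (not_lt_zero b Hb). Qed.

Lemma tree_prefix p s t : is_tree p -> p t -> prefix s t -> p s.
Proof. intros [_ H] Ht Hp. eauto. Qed.

Lemma tree_restr p x a b : is_tree p -> le a b -> p (restr x b) -> p (restr x a).
Proof. intros Ht H Hp. eapply tree_prefix; eauto. now apply prefix_restr. Qed.

Lemma tree_root p : is_tree p -> p root.
Proof. intros Ht. destruct (proj1 Ht) as [s Hs]. exact (tree_prefix p root s Ht Hs (prefix_root s)). Qed.

Lemma closed_restr p x a : lt_kappa_closed K lt p -> is_limit a ->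
  (forall b, lt b a -> p (restr x b)) -> p (restr x a).
Proof.
  intros Hc Hl Hp. apply (Hc a (restr x)); auto.
  - intros b b' H1 H2. now apply prefix_restr, lt_le_incl.
  - split; [intros b Hb; now apply prefix_restr, lt_le_incl|].
    intros d Hd. exists (succ d). split; [now apply Hl | apply lt_succ].
Qed.

Lemma pruned_succ p t : is_tree p -> pruned K lt p -> p t -> exists g, p (snoc t g).
Proof.
  intros Ht Hp H. destruct (Hp t H) as [u [Hu [Hpre Hne]]].
  destruct (node_restr u) as [x Hx]. rewrite Hx in Hpre.
  apply prefix_restr_iff in Hpre as [[E|Hl] Et]; [tauto|].
  exists (x (len t)). rewrite Et, snoc_restr_self.
  apply (tree_restr p x _ (len u)); auto; [now apply succ_least | now rewrite <- Hx].
Qed.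

Lemma branch_iff p x : branch K lt p x <-> forall a, p (restr x a).
Proof.
  split.
  - intros H a. destruct (H a) as [u [Hu Hr]]. apply is_restr_iff in Hr. now subst.
  - intros H a. exists (restr x a). split; auto. now apply is_restr_iff.
Qed.

Definition choice (p : node -> Prop) (t : node) : K := eps (fun g => p (snoc t g)).

Lemma choice_spec p t : is_tree p -> pruned K lt p -> p t -> p (snoc t (choice p t)).
Proof. intros Ht Hp H. apply (eps_spec (fun g => p (snoc t g))), pruned_succ; auto. Qed.

(* Above s, x follows the chosen successors; limits exist by closure. *)
Lemma branch_through p s : is_tree p -> pruned K lt p -> lt_kappa_closed K lt p -> p s ->
  exists x, (forall a, p (restr x a)) /\ restr x (len s) = s.
Proof.
  intros Ht Hp Hc Hs.
  pose (step := fun (b : K) (f : forall c, lt c b -> K) =>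
     if ltdec b (len s) then to_fun s b
     else choice p (restr (fun c => match ltdec c b with left h => f c h | right _ => zero end) b)).
  pose (x := Fix lt_wf (fun _ => K) step).
  assert (Hx : forall b, x b = if ltdec b (len s) then to_fun s b else choice p (restr x b)).
  { intros b. unfold x at 1. rewrite Fix_eq.
    - unfold step at 1. destruct (ltdec b (len s)); auto. f_equal. apply restr_congr.
      intros c Hc'. destruct (ltdec c b); tauto.
    - intros b0 f g H. unfold step. destruct (ltdec b0 (len s)); auto. f_equal. apply restr_congr.
      intros c _. destruct (ltdec c b0); auto. }
  assert (Es : restr x (len s) = s).
  { rewrite <- (restr_to_fun s) at 2. apply restr_congr. intros b Hb. rewrite Hx.
    destruct (ltdec b (len s)); tauto. }
  exists x. split; auto.
  intros a. induction a as [a IH] using (well_founded_ind lt_wf).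
  destruct (ltdec (len s) a) as [Hl|Hl].
  - destruct (succ_or_limit a) as [[b ->]|Hlim]; [|now apply closed_restr].
    rewrite <- snoc_restr_self, Hx. destruct (ltdec b (len s)) as [h|h].
    + exfalso; exact (le_not_lt _ _ (lt_succ_le _ _ Hl) h).
    + apply choice_spec, IH, lt_succ; auto.
  - apply not_lt_le in Hl. eapply tree_restr; eauto. now rewrite Es.
Qed.

Definition splits (p : node -> Prop) (t : node) : Prop := club (fun g => p (snoc t g)).

Definition normal (p : node -> Prop) : Prop :=
  forall t, p t -> splits p t \/ (forall g g', p (snoc t g) -> p (snoc t g') -> g = g').

Definition normal_cond (p : node -> Prop) : Prop := cond p /\ normal p.

Lemma club_splitting_iff p t : club_splitting K lt p t <-> splits p t.
Proof. split; apply club_ext; intros g; rewrite succ_set_iff; tauto. Qed.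

Lemma is_club_miller_intro p : is_tree p -> pruned K lt p -> lt_kappa_closed K lt p ->
  (forall x, (forall a, p (restr x a)) -> club (fun a => splits p (restr x a))) -> cond p.
Proof.
  intros Ht Hp Hc Hb. split; [exact Ht|]. split; [exact Hp|]. split; [exact Hc|]. split.
  - intros s Hs. destruct (branch_through p s) as [x [Hx Es]]; auto.
    destruct (proj1 (Hb x Hx) (len s)) as [a [Ha Hs2]].
    exists (restr x a). split; auto. split; [rewrite <- Es at 1; now apply prefix_restr|].
    now apply club_splitting_iff.
  - intros x Hx. rewrite branch_iff in Hx.
    apply (club_ext (fun a => splits p (restr x a))); auto. intros a. split.
    + intros H. exists (restr x a). split; [now apply is_restr_iff | now apply club_splitting_iff].
    + intros [u [Hu Hs]]. apply is_restr_iff in Hu. subst. now apply club_splitting_iff.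
Qed.

Lemma cond_tree p : cond p -> is_tree p.
Proof. intros H; apply H. Qed.

Lemma cond_pruned p : cond p -> pruned K lt p.
Proof. intros H; apply H. Qed.

Lemma cond_closed p : cond p -> lt_kappa_closed K lt p.
Proof. intros H; apply H. Qed.

Lemma cond_root p : cond p -> p root.
Proof. intros H. now apply tree_root, cond_tree. Qed.

Lemma cond_succ p t : cond p -> p t -> exists g, p (snoc t g).
Proof. intros H Ht. apply pruned_succ; auto; [apply cond_tree | apply cond_pruned]; auto. Qed.

Lemma cond_branch_club p x : cond p -> (forall a, p (restr x a)) ->
  club (fun a => splits p (restr x a)).
Proof.
  intros H Hx. destruct H as [_ [_ [_ [_ H]]]]. rewrite <- branch_iff in Hx.
  apply (club_ext (fun a => exists u, is_restr K lt x a u /\ club_splitting K lt p u)); auto.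
  intros a. split.
  - intros [u [Hu Hs]]. apply is_restr_iff in Hu. subst. now apply club_splitting_iff.
  - intros Hs. exists (restr x a). split; [now apply is_restr_iff | now apply club_splitting_iff].
Qed.

Lemma not_splits_of_unique p t :
  (forall g g', p (snoc t g) -> p (snoc t g') -> g = g') -> ~ splits p t.
Proof. intros H Hs. exact (club_not_subsingleton _ Hs H). Qed.

Lemma splits_superset (A B : node -> Prop) t : normal B -> (forall u, A u -> B u) -> B t ->
  splits A t -> splits B t.
Proof.
  intros HB HAB Bt HA. destruct (HB t Bt) as [h|h]; auto.
  exfalso. apply (not_splits_of_unique A t); auto.
Qed.

(** * Intersections of chains of normal conditions *)

Lemma tree_inter (P : (node -> Prop) -> Prop) :
  (forall U, P U -> is_tree U) -> is_tree (fun t => forall U, P U -> U t).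
Proof.
  intros HP. split.
  - exists root. intros U HU. now apply tree_root, HP.
  - intros s t Hst Ht U HU. exact (tree_prefix U s t (HP U HU) (Ht U HU) Hst).
Qed.

Lemma closed_inter (P : (node -> Prop) -> Prop) :
  (forall U, P U -> lt_kappa_closed K lt U) ->
  lt_kappa_closed K lt (fun t => forall U, P U -> U t).
Proof. intros HP a c Hc Hch u Hu U HU. apply (HP U HU a c); auto. intros b Hb. now apply Hc. Qed.

Lemma normal_unique_succ U t : normal_cond U -> U t -> ~ splits U t ->
  exists g0, forall g, U (snoc t g) <-> g = g0.
Proof.
  intros [CU NU] Ut Hns. destruct (NU t Ut) as [|Hu]; [tauto|].
  destruct (cond_succ U t CU Ut) as [g0 Hg0]. exists g0. split; [auto | now intros ->].
Qed.

Lemma succ_of_comparable (U V : node -> Prop) t g0 : cond V -> V t ->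
  (forall g, U (snoc t g) <-> g = g0) ->
  (forall u, U u -> V u) \/ (forall u, V u -> U u) -> V (snoc t g0).
Proof.
  intros CV Vt Hg0 [HUV|HVU]; [now apply HUV, Hg0|].
  destruct (cond_succ V t CV Vt) as [g Hg].
  now rewrite <- (proj1 (Hg0 g) (HVU _ Hg)).
Qed.

Section ChainIntersection.
Variables (a : K) (T0 : node -> Prop) (T : K -> node -> Prop).
Hypothesis HT0 : normal_cond T0.
Hypothesis HT : forall b, lt b a -> normal_cond (T b).
Hypothesis HT_T0 : forall b, lt b a -> forall t, T b t -> T0 t.
Hypothesis HT_dec : forall b b', lt b b' -> lt b' a -> forall t, T b' t -> T b t.

Definition in_chain (U : node -> Prop) : Prop := U = T0 \/ exists b, lt b a /\ U = T b.

Definition chain_inter (t : node) : Prop := forall U, in_chain U -> U t.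

Lemma chain_inter_iff t : chain_inter t <-> T0 t /\ forall b, lt b a -> T b t.
Proof.
  split.
  - intros H. split; [apply H; now left|]. intros b Hb. apply H. right; eauto.
  - intros [H0 Hb] U [->|[b [Hb' ->]]]; auto.
Qed.

Lemma in_chain_normal_cond U : in_chain U -> normal_cond U.
Proof. intros [->|[b [Hb ->]]]; auto. Qed.

Lemma in_chain_comparable U V : in_chain U -> in_chain V ->
  (forall t, U t -> V t) \/ (forall t, V t -> U t).
Proof.
  intros [->|[b [Hb ->]]] [->|[b' [Hb' ->]]]; auto.
  - right. eauto.
  - left. eauto.
  - destruct (lt_trichotomy b b') as [h|[->|h]]; eauto.
Qed.

Definition all_split (t : node) : Prop := forall U, in_chain U -> splits U t.

Lemma chain_inter_splits t : all_split t -> splits chain_inter t.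
Proof.
  intros Hall. apply (club_ext (fun g => T0 (snoc t g) /\ forall b, lt b a -> T b (snoc t g))).
  - intros g. symmetry. apply chain_inter_iff.
  - apply club_inter; [apply Hall; now left|]. intros b Hb. apply Hall. right; eauto.
Qed.

Lemma chain_inter_unique_succ t : chain_inter t -> ~ all_split t ->
  exists g0, forall g, chain_inter (snoc t g) <-> g = g0.
Proof.
  intros It Hns.
  assert (HU : exists U, in_chain U /\ ~ splits U t).
  { apply NNPP; intro H. apply Hns. intros U HU. apply NNPP; eauto. }
  destruct HU as [U [HU Hs]].
  destruct (normal_unique_succ U t (in_chain_normal_cond U HU) (It U HU) Hs) as [g0 Hg0].
  exists g0. intros g. split.
  - intros H. apply Hg0, H, HU.
  - intros -> V HV. apply (succ_of_comparable U V t g0); [apply in_chain_normal_cond, HV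
      | apply It, HV | exact Hg0 | now apply in_chain_comparable].
Qed.

Lemma chain_inter_splits_iff t : chain_inter t -> splits chain_inter t <-> all_split t.
Proof.
  intros It. split; [|apply chain_inter_splits].
  intros Hs U HU. apply (splits_superset chain_inter U t); auto.
  - apply in_chain_normal_cond, HU.
  - intros u Iu. exact (Iu U HU).
  - exact (It U HU).
Qed.

Lemma chain_inter_succ t : chain_inter t -> exists g, chain_inter (snoc t g).
Proof.
  intros It. destruct (classic (all_split t)) as [H|H].
  - destruct (club_gt _ zero (chain_inter_splits t H)) as [g [_ Hg]]. eauto.
  - destruct (chain_inter_unique_succ t It H) as [g0 Hg0]. exists g0. now apply Hg0.
Qed.

Lemma chain_inter_normal_cond : normal_cond chain_inter.
Proof.
  assert (Hcond : forall U, in_chain U -> cond U) by (intros U HU; apply in_chain_normal_cond, HU).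
  split.
  - apply is_club_miller_intro.
    + apply tree_inter. intros U HU. now apply cond_tree, Hcond.
    + intros s Is. destruct (chain_inter_succ s Is) as [g Hg]. exists (snoc s g).
      split; [exact Hg | split; [apply prefix_snoc | apply len_snoc_neq]].
    + apply closed_inter. intros U HU. now apply cond_closed, Hcond.
    + intros x Hx. apply (club_ext (fun c => splits T0 (restr x c) /\
                                             forall b, lt b a -> splits (T b) (restr x c))).
      * intros c. rewrite chain_inter_splits_iff by apply Hx. split.
        -- intros [H0 Hb] U [->|[b [Hb' ->]]]; auto.
        -- intros H. split; [apply H; now left|]. intros b Hb. apply H. right; eauto.
      * apply club_inter.
        -- apply cond_branch_club; [apply HT0|]. intros c. apply Hx. now left.
        -- intros b Hb. apply cond_branch_club; [apply HT, Hb|]. intros c. apply Hx. right; eauto.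
  - intros t It. destruct (classic (all_split t)) as [H|H]; [left; now apply chain_inter_splits|].
    right. destruct (chain_inter_unique_succ t It H) as [g0 Hg0].
    intros g g' Hg Hg'. apply Hg0 in Hg. apply Hg0 in Hg'. congruence.
Qed.

End ChainIntersection.

Lemma chain_inter_congr a T0 (T T' : K -> node -> Prop) :
  (forall b, lt b a -> T b = T' b) -> chain_inter a T0 T = chain_inter a T0 T'.
Proof.
  intros H. apply functional_extensionality; intro t. apply propositional_extensionality.
  rewrite !chain_inter_iff. split; intros [H0 Hb]; split; auto; intros b h.
  - rewrite <- H; auto.
  - rewrite H; auto.
Qed.

(** * A normal condition below every condition *)

Section NormalPart.
Variable q : node -> Prop.
Hypothesis Cq : cond q.

Definition normal_part (t : node) : Prop :=
  q t /\ forall c, lt c (len t) -> ~ splits q (restr (to_fun t) c) ->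
                   to_fun t c = choice q (restr (to_fun t) c).

Lemma normal_part_sub t : normal_part t -> q t.
Proof. now intros [H _]. Qed.

Lemma normal_part_restr x a : normal_part (restr x a) <->
  q (restr x a) /\ forall c, lt c a -> ~ splits q (restr x c) -> x c = choice q (restr x c).
Proof.
  unfold normal_part. rewrite len_restr. split; intros [H1 H2]; split; auto; intros c Hc.
  - rewrite <- (restr_to_fun_restr x c a) by now apply lt_le_incl.
    rewrite <- (to_fun_restr x a c Hc) at 1. now apply H2.
  - rewrite (restr_to_fun_restr x c a), (to_fun_restr x a c Hc) by now apply lt_le_incl.
    now apply H2.
Qed.

Lemma normal_part_snoc t g : normal_part t -> q (snoc t g) ->
  (~ splits q t -> g = choice q t) -> normal_part (snoc t g).
Proof.
  revert t. refine (node_restr_ind _ _). intros x a.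
  rewrite snoc_restr, !normal_part_restr. intros [_ Ht] Hq Hg. split; auto.
  intros c Hc. rewrite restr_upd by now apply lt_succ_le. unfold upd at 1.
  destruct (ltdec c a) as [h|h]; [now apply Ht|].
  now destruct (lt_succ_le _ _ Hc) as [->|].
Qed.

Lemma normal_part_snoc_choice t g : ~ splits q t -> normal_part (snoc t g) -> g = choice q t.
Proof.
  revert t. refine (node_restr_ind _ _). intros x a.
  rewrite snoc_restr, normal_part_restr. intros Hns [_ H].
  specialize (H a (lt_succ a)). rewrite restr_upd in H by apply le_refl.
  unfold upd in H. destruct (ltdec a a) as [h|_]; [now apply lt_irrefl in h | auto].
Qed.

Lemma normal_part_splits_iff t : normal_part t -> splits normal_part t <-> splits q t.
Proof.
  intros Ht. split.
  - intros Hs. apply NNPP; intro Hns. apply (not_splits_of_unique normal_part t); auto.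
    intros g g' H1 H2. now rewrite (normal_part_snoc_choice t g), (normal_part_snoc_choice t g').
  - intros Hs. apply (club_ext (fun g => q (snoc t g))); auto.
    intros g. split; [|apply normal_part_sub]. intros Hg. now apply normal_part_snoc.
Qed.

Lemma normal_part_closed : lt_kappa_closed K lt normal_part.
Proof.
  intros a0 c Hc Hch u Hu.
  assert (Hq : q u) by (apply (cond_closed q Cq a0 c); auto; intros b Hb; now apply Hc).
  revert u Hu Hq. refine (node_restr_ind _ _). intros x a Hu Hq.
  apply normal_part_restr. split; auto.
  intros d Hd. destruct (proj2 Hu d Hd) as [b [Hb Hdb]].
  pose proof (proj1 Hu b Hb) as Hpre. apply prefix_restr_iff in Hpre as [_ E].
  specialize (Hc b Hb). rewrite E, normal_part_restr in Hc. now apply Hc.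
Qed.

Lemma normal_part_normal_cond : normal_cond normal_part.
Proof.
  split.
  - apply is_club_miller_intro.
    + split; [exists root; split; [now apply cond_root|]|].
      * intros c Hc. exfalso. exact (not_lt_zero c Hc).
      * intros s t Hst Ht. revert t Ht Hst. refine (node_restr_ind _ _).
        intros x a Ht Hst. apply prefix_restr_iff in Hst as [Hl ->].
        apply normal_part_restr in Ht as [Hq Hx]. apply normal_part_restr. split.
        -- eapply tree_restr; eauto. now apply cond_tree.
        -- intros c Hc. apply Hx. eapply lt_le_trans; eauto.
    + intros s Hs. exists (snoc s (choice q s)). split.
      * apply normal_part_snoc; auto.
        apply choice_spec; [apply cond_tree | apply cond_pruned | apply normal_part_sub]; auto.
      * split; [apply prefix_snoc | apply len_snoc_neq].
    + exact normal_part_closed.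
    + intros x Hx. apply (club_ext (fun c => splits q (restr x c))).
      * intros c. now rewrite normal_part_splits_iff.
      * apply cond_branch_club; auto. intros c. now apply normal_part_sub.
  - intros t Ht. destruct (classic (splits q t)) as [h|h].
    + left. now apply normal_part_splits_iff.
    + right. intros g g' H1 H2.
      now rewrite (normal_part_snoc_choice t g), (normal_part_snoc_choice t g').
Qed.

End NormalPart.

Lemma normal_cond_below q : cond q -> exists r, normal_cond r /\ forall t, r t -> q t.
Proof. intros Cq. exists (normal_part q). split; [now apply normal_part_normal_cond | apply normal_part_sub]. Qed.

(** * Avoiding a nowhere dense set above a node *)

Lemma union_prefix a (c : K -> node) u s : is_union K lt a c u ->
  (forall b, lt b a -> prefix (c b) s) -> prefix u s.
Proof.
  intros [Hpre Hcof] Hs. split.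
  - apply not_lt_le. intro Hl. destruct (Hcof _ Hl) as [b [Hb Hlb]].
    exact (le_not_lt _ _ (proj1 (Hs b Hb)) Hlb).
  - intros d Hd. destruct (Hcof d Hd) as [b [Hb Hdb]].
    rewrite <- (proj2 (Hpre b Hb) d Hdb). now apply (Hs b Hb).
Qed.

Section Cone.
Variables (T : node -> Prop) (s : node).
Hypothesis NT : normal_cond T.
Hypothesis Ts : T s.

Definition cone (t : node) : Prop := T t /\ (prefix t s \/ prefix s t).

Lemma cone_sub t : cone t -> T t.
Proof. now intros [H _]. Qed.

Lemma cone_cases t : cone t -> prefix s t \/ (prefix t s /\ lt (len t) (len s)).
Proof.
  intros [_ [H|H]]; auto. destruct (proj1 H) as [E|Hl]; auto.
  left. rewrite (prefix_len_eq t s H E). apply prefix_refl.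
Qed.

Lemma cone_snoc_above t g : prefix s t -> cone (snoc t g) <-> T (snoc t g).
Proof.
  intros H. split; [apply cone_sub|]. intros Hg. split; auto.
  right. eapply prefix_trans; [exact H | apply prefix_snoc].
Qed.

Lemma cone_snoc_below t g : prefix t s -> lt (len t) (len s) -> cone (snoc t g) ->
  vals s (len t) = Some g.
Proof.
  intros Hts Hl [_ [H|H]]; [now apply snoc_prefix_vals|].
  assert (E : len s = len (snoc t g)).
  { apply le_antisym; [apply H | rewrite len_snoc; now apply succ_least]. }
  rewrite (prefix_len_eq s (snoc t g) H E). apply vals_snoc.
Qed.

Lemma cone_splits_iff t : cone t -> splits cone t <-> prefix s t /\ splits T t.
Proof.
  intros Ct. split.
  - intros Hs. destruct (cone_cases t Ct) as [H|[H1 H2]].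
    + split; auto. apply (splits_superset cone T t); auto; [apply NT | apply cone_sub | apply Ct].
    + exfalso. apply (not_splits_of_unique cone t); auto. intros g g' G1 G2.
      apply (cone_snoc_below t) in G1; apply (cone_snoc_below t) in G2; auto. congruence.
  - intros [H Hs]. apply (club_ext (fun g => T (snoc t g))); auto.
    intros g. symmetry. now apply cone_snoc_above.
Qed.

Lemma cone_closed : lt_kappa_closed K lt cone.
Proof.
  intros a c Hc Hch u Hu. split.
  - apply (cond_closed T (proj1 NT) a c); auto. intros b Hb. now apply cone_sub, Hc.
  - destruct (classic (exists b, lt b a /\ prefix s (c b))) as [[b [Hb Hsb]]|Hn].
    + right. eapply prefix_trans; [exact Hsb | now apply Hu].
    + left. apply (union_prefix a c); auto. intros b Hb.
      destruct (proj2 (Hc b Hb)) as [h|h]; auto. exfalso; eauto.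
Qed.

Lemma cone_branch x : (forall a, cone (restr x a)) -> restr x (len s) = s.
Proof. intros Hx. apply comparable_len_eq; [apply (Hx (len s)) | apply len_restr]. Qed.

Lemma cone_normal_cond : normal_cond cone.
Proof.
  destruct NT as [CT NT']. split.
  - apply is_club_miller_intro.
    + split; [exists root; split; [now apply cond_root | left; apply prefix_root]|].
      intros t u Htu [Tu Hu]. split; [eapply tree_prefix; eauto; now apply cond_tree|].
      destruct Hu as [Hu|Hu]; [left; eapply prefix_trans; eauto | eapply prefix_total; eauto].
    + intros t Ct. destruct (cone_cases t Ct) as [H|[H1 H2]].
      * destruct (cond_succ T t CT (cone_sub t Ct)) as [g Hg]. exists (snoc t g).
        split; [now apply cone_snoc_above | split; [apply prefix_snoc | apply len_snoc_neq]].
      * exists s. split; [split; [exact Ts | left; apply prefix_refl]|].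
        split; [exact H1 | intro E; rewrite E in H2; exact (lt_irrefl _ H2)].
    + exact cone_closed.
    + intros x Hx. apply (club_ext (fun c => splits T (restr x c) /\ le (len s) c)).
      * intros c. rewrite cone_splits_iff, <- (cone_branch x Hx), prefix_restr_iff by apply Hx.
        rewrite len_restr. split; [intros [H1 H2]; split; auto | intros [[H1 _] H2]; auto].
      * apply club_inter2; [apply cond_branch_club; auto; intros c; apply cone_sub, Hx | apply club_tail].
  - intros t Ct. destruct (cone_cases t Ct) as [H|[H1 H2]].
    + destruct (NT' t (cone_sub t Ct)) as [h|h].
      * left. now apply cone_splits_iff.
      * right. intros g g' G1 G2. apply h; now apply cone_sub.
    + right. intros g g' G1 G2.
      apply (cone_snoc_below t) in G1; apply (cone_snoc_below t) in G2; auto. congruence.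
Qed.

End Cone.

Definition avoids (r : node -> Prop) (Y : (K -> K) -> Prop) : Prop :=
  forall y, (forall a, r (restr y a)) -> ~ Y y.

Lemma normal_cond_avoid T s (Y : (K -> K) -> Prop) : normal_cond T -> T s ->
  nowhere_dense K lt Y ->
  exists r, normal_cond r /\ (forall t, r t -> T t) /\ r s /\ avoids r Y.
Proof.
  intros NT Ts HY.
  destruct (HY (cone T s) (proj1 (cone_normal_cond T s NT Ts))) as [q [Cq [Hq HqY]]].
  destruct (normal_cond_below q Cq) as [r [Nr Hr]].
  exists r. split; [exact Nr|]. split; [intros t Rt; now apply (cone_sub T s), Hq, Hr|]. split.
  - destruct Nr as [Cr _].
    destruct (branch_through r root) as [y [Hy _]];
      [apply cond_tree | apply cond_pruned | apply cond_closed | apply cond_root | ]; auto.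
    rewrite <- (cone_branch T s y); auto.
  - intros y Hy. apply HqY, branch_iff. intros a. now apply Hr.
Qed.

(** * Fusion *)

Definition avoid_spec (T : node -> Prop) (s : node) (Y : (K -> K) -> Prop) (r : node -> Prop) :=
  normal_cond r /\ (forall t, r t -> T t) /\ r s /\ avoids r Y.

Definition shrink (T : node -> Prop) (s : node) (Y : (K -> K) -> Prop) : node -> Prop :=
  match excluded_middle_informative (exists r, avoid_spec T s Y r) with
  | left H => proj1_sig (constructive_indefinite_description _ H)
  | right _ => T
  end.

Lemma shrink_spec T s Y : normal_cond T -> T s -> nowhere_dense K lt Y ->
  avoid_spec T s Y (shrink T s Y).
Proof.
  intros NT Ts HY. unfold shrink. destruct (excluded_middle_informative _) as [H|H].
  - exact (proj2_sig (constructive_indefinite_description _ H)).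
  - exfalso. apply H, normal_cond_avoid; auto.
Qed.

Lemma succ_eq_lt a b : a = succ b -> lt b a.
Proof. intros ->; apply lt_succ. Qed.

Section Fusion.
Variable F : K -> (K -> K) -> Prop.
Variable p0 : node -> Prop.
Hypothesis HF : forall a, nowhere_dense K lt (F a).
Hypothesis Hp0 : normal_cond p0.

Definition fusion_step (x : K -> K) (a : K) (rec : forall b, lt b a -> node -> Prop) :
  node -> Prop :=
  match excluded_middle_informative (exists b, a = succ b) with
  | left H =>
      let (b, Hb) := constructive_indefinite_description _ H in
      let T := rec b (succ_eq_lt a b Hb) in
      if excluded_middle_informative (T (restr x a)) then shrink T (restr x a) (F b) else T
  | right _ => fun t => p0 t /\ forall b (h : lt b a), rec b h t
  end.

(* The decreasing sequence Phi_x(a) of the proof idea. *)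
Definition fusion_seq (x : K -> K) : K -> node -> Prop :=
  Fix lt_wf (fun _ => node -> Prop) (fusion_step x).

Lemma fusion_seq_eq x a : fusion_seq x a = fusion_step x a (fun b _ => fusion_seq x b).
Proof.
  unfold fusion_seq. rewrite Fix_eq; auto. intros a0 f g H.
  replace f with g; auto.
  apply functional_extensionality_dep; intro b. apply functional_extensionality_dep; intro h.
  now rewrite H.
Qed.

Lemma fusion_seq_succ x b : fusion_seq x (succ b) =
  if excluded_middle_informative (fusion_seq x b (restr x (succ b)))
  then shrink (fusion_seq x b) (restr x (succ b)) (F b) else fusion_seq x b.
Proof.
  rewrite fusion_seq_eq. unfold fusion_step. destruct (excluded_middle_informative _) as [H|H].
  - destruct (constructive_indefinite_description _ H) as [b' Hb']. now apply succ_inj in Hb' as ->.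
  - exfalso; eauto.
Qed.

Lemma fusion_seq_limit x a : is_limit a -> fusion_seq x a = chain_inter a p0 (fusion_seq x).
Proof.
  intros Hl. rewrite fusion_seq_eq. unfold fusion_step.
  destruct (excluded_middle_informative _) as [[b ->]|H]; [now apply succ_not_limit in Hl|].
  apply functional_extensionality; intro t. apply propositional_extensionality.
  now rewrite chain_inter_iff.
Qed.

Lemma fusion_seq_inv x a : normal_cond (fusion_seq x a) /\
  (forall t, fusion_seq x a t -> p0 t) /\
  (forall c, lt c a -> forall t, fusion_seq x a t -> fusion_seq x c t).
Proof.
  induction a as [a IH] using (well_founded_ind lt_wf).
  destruct (succ_or_limit a) as [[b ->]|Hl].
  - destruct (IH b (lt_succ b)) as [N [P M]].
    assert (Hstep : normal_cond (fusion_seq x (succ b)) /\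
                    forall t, fusion_seq x (succ b) t -> fusion_seq x b t).
    { rewrite fusion_seq_succ. destruct (excluded_middle_informative _) as [Hin|Hout]; auto.
      destruct (shrink_spec (fusion_seq x b) (restr x (succ b)) (F b)) as [Nr [Sr _]]; auto. }
    destruct Hstep as [Ns Ss]. split; [exact Ns|]. split; [auto|].
    intros c Hc t Ht. destruct (lt_succ_le _ _ Hc) as [->|Hcb]; auto.
  - rewrite fusion_seq_limit by exact Hl. split; [|split].
    + apply chain_inter_normal_cond; auto.
      * intros b Hb. apply IH, Hb.
      * intros b Hb t Ht. apply (IH b Hb), Ht.
      * intros b b' H1 H2 t Ht. now apply (IH b' H2).
    + intros t Ht. now apply chain_inter_iff in Ht.
    + intros c Hc t Ht. apply (chain_inter_iff a p0 (fusion_seq x)) in Ht as [_ Ht].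
      exact (Ht c Hc).
Qed.

Lemma fusion_seq_normal_cond x a : normal_cond (fusion_seq x a).
Proof. apply fusion_seq_inv. Qed.

Lemma fusion_seq_sub_p0 x a t : fusion_seq x a t -> p0 t.
Proof. apply fusion_seq_inv. Qed.

Lemma fusion_seq_mono x c a t : le c a -> fusion_seq x a t -> fusion_seq x c t.
Proof. intros [->|Hc] Ht; auto. now apply (fusion_seq_inv x a). Qed.

Lemma fusion_seq_local x y a : (forall c, lt c a -> x c = y c) -> fusion_seq x a = fusion_seq y a.
Proof.
  revert x y. induction a as [a IH] using (well_founded_ind lt_wf). intros x y Hxy.
  destruct (succ_or_limit a) as [[b ->]|Hl].
  - rewrite !fusion_seq_succ, (IH b (lt_succ b) x y), (restr_congr x y (succ b)); auto.
    intros c Hc. apply Hxy. eapply lt_trans; [exact Hc | apply lt_succ].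
  - rewrite !fusion_seq_limit by exact Hl. apply chain_inter_congr. intros b Hb.
    apply IH; auto. intros c Hc. apply Hxy. eapply lt_trans; eauto.
Qed.

Lemma fusion_seq_succ_self x a :
  fusion_seq x (succ a) (restr x (succ a)) <-> fusion_seq x a (restr x (succ a)).
Proof.
  split; [apply fusion_seq_mono, lt_le_incl, lt_succ|].
  intros H. rewrite fusion_seq_succ. destruct (excluded_middle_informative _); [|tauto].
  apply shrink_spec; auto. apply fusion_seq_normal_cond.
Qed.

Definition fusion_tree (s : node) : Prop := fusion_seq (to_fun s) (len s) s.

Lemma fusion_tree_restr x a : fusion_tree (restr x a) <-> fusion_seq x a (restr x a).
Proof.
  unfold fusion_tree. rewrite len_restr, (fusion_seq_local (to_fun (restr x a)) x a); [tauto|].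
  intros c Hc. now apply to_fun_restr.
Qed.

Lemma fusion_tree_snoc x a g :
  fusion_tree (snoc (restr x a) g) <-> fusion_seq x a (snoc (restr x a) g).
Proof.
  rewrite snoc_restr, fusion_tree_restr, fusion_seq_succ_self.
  rewrite (fusion_seq_local (upd x a g) x a); [tauto|].
  intros c Hc; unfold upd; destruct (ltdec c a); tauto.
Qed.

Lemma fusion_tree_sub_p0 s : fusion_tree s -> p0 s.
Proof. apply fusion_seq_sub_p0. Qed.

Lemma fusion_seq_of_tree x a e b : fusion_tree (restr x a) -> le e a -> le b a ->
  fusion_seq x e (restr x b).
Proof.
  intros Ha He Hb. apply fusion_tree_restr in Ha.
  apply (tree_restr _ x b a); [apply cond_tree, fusion_seq_normal_cond | exact Hb|].
  now apply (fusion_seq_mono x e a).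
Qed.

Lemma fusion_tree_closed : lt_kappa_closed K lt fusion_tree.
Proof.
  intros a0 c Hc Hch u Hu. destruct (node_restr u) as [x Ex].
  assert (Hcx : forall b, lt b a0 -> c b = restr x (len (c b)) /\ le (len (c b)) (len u)).
  { intros b Hb. pose proof (proj1 Hu b Hb) as H. rewrite Ex in H.
    apply prefix_restr_iff in H. tauto. }
  destruct (succ_or_limit (len u)) as [[e He]|Hl].
  - destruct (proj2 Hu e) as [b [Hb Heb]]; [rewrite He; apply lt_succ|].
    assert (E : len (c b) = len u).
    { apply le_antisym; [apply Hcx; auto | rewrite He; now apply succ_least]. }
    rewrite <- (prefix_len_eq (c b) u); auto. apply Hu, Hb.
  - assert (Hbelow : forall e b, lt e (len u) -> lt b (len u) -> fusion_seq x e (restr x b)).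
    { intros e b He Hb. destruct (le_max e b) as [d [H1 [H2 Hd]]].
      assert (HdL : lt d (len u)) by (destruct Hd as [-> | ->]; auto).
      destruct (proj2 Hu d HdL) as [j [Hj Hdj]].
      apply (fusion_seq_of_tree x (len (c j)));
        [rewrite <- (proj1 (Hcx j Hj)); now apply Hc | |];
        apply lt_le_incl; eapply le_lt_trans; eauto. }
    rewrite Ex. apply fusion_tree_restr. rewrite fusion_seq_limit by exact Hl.
    apply chain_inter_iff. split.
    + apply closed_restr; [apply cond_closed, Hp0 | exact Hl|].
      intros b Hb. apply (fusion_seq_sub_p0 x b), Hbelow; auto.
    + intros e He. apply closed_restr; [apply cond_closed, fusion_seq_normal_cond | exact Hl|].
      intros b Hb. apply Hbelow; auto.
Qed.

Section Branch.
Variable x : K -> K.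
Hypothesis Hx : forall a, fusion_tree (restr x a).

Lemma branch_fusion_seq b a : fusion_seq x b (restr x a).
Proof. destruct (le_max b a) as [m [H1 [H2 _]]]. now apply (fusion_seq_of_tree x m). Qed.

Lemma branch_splits_mono b b' a : le b b' ->
  splits (fusion_seq x b') (restr x a) -> splits (fusion_seq x b) (restr x a).
Proof.
  intros H. apply splits_superset;
    [apply fusion_seq_normal_cond | intros t; now apply fusion_seq_mono | apply branch_fusion_seq].
Qed.

Lemma branch_splits_p0 b a : splits (fusion_seq x b) (restr x a) -> splits p0 (restr x a).
Proof.
  apply splits_superset;
    [apply Hp0 | apply fusion_seq_sub_p0 | apply (fusion_seq_sub_p0 x b), branch_fusion_seq].
Qed.

Lemma branch_levels_club b : club (fun a => splits (fusion_seq x b) (restr x a)).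
Proof. apply cond_branch_club; [apply fusion_seq_normal_cond | intros a; apply branch_fusion_seq]. Qed.

Lemma branch_p0_levels_club : club (fun a => splits p0 (restr x a)).
Proof.
  apply cond_branch_club; [apply Hp0|]. intros a. apply (fusion_seq_sub_p0 x a), branch_fusion_seq.
Qed.

Lemma branch_splits_limit L : is_limit L -> splits p0 (restr x L) ->
  (forall b, lt b L -> splits (fusion_seq x b) (restr x L)) ->
  splits (fusion_seq x L) (restr x L).
Proof.
  intros Hl H0 Hb. rewrite fusion_seq_limit by exact Hl.
  apply chain_inter_splits. intros U [->|[b [Hb' ->]]]; auto.
Qed.

(* A splitting level c of Phi_x(c) is one of every Phi_x(b), b <= c; so at a
   limit of such levels all Phi_x(b), b < L, split, hence so does Phi_x(L). *)
Lemma branch_splitting_levels_club : club (fun a => splits (fusion_seq x a) (restr x a)).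
Proof.
  split.
  - intros a0. pose (f := fun c => next_in (fun e => splits (fusion_seq x c) (restr x e)) c).
    assert (Hf : forall c, lt c (f c) /\ splits (fusion_seq x c) (restr x (f c)))
      by (intros c; apply next_in_spec, branch_levels_club).
    destruct (iter_sup_exists f a0) as [L HL]. assert (HaL := iter_sup_gt f a0 L HL).
    exists L. split; [now apply lt_le_incl|]. apply branch_splits_limit.
    + apply (iter_sup_limit f a0); auto. intros c; apply Hf.
    + apply (club_iter_sup _ f a0 a0 L branch_p0_levels_club HaL); auto.
      intros c _. exists (f c). split; [apply Hf | split; [apply le_refl|]].
      apply (branch_splits_p0 c), Hf.
    + intros b Hb. apply (club_iter_sup _ f a0 b L (branch_levels_club b) Hb); auto.
      intros c Hc. exists (f c). split; [apply Hf | split; [apply le_refl|]].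
      apply (branch_splits_mono b c); auto. apply Hf.
  - intros L HL Hcof. apply branch_splits_limit; [exact (cofinal_limit _ L Hcof)| |].
    + apply (proj2 branch_p0_levels_club); auto. intros b Hb.
      destruct (Hcof b Hb) as [c [H1 [H2 H3]]]. exists c.
      split; [exact H1 | split; [exact H2 | now apply (branch_splits_p0 c)]].
    + intros b Hb. apply (proj2 (branch_levels_club b)); auto. intros b' Hb'.
      destruct (le_max b b') as [m [H1 [H2 Hm]]].
      assert (HmL : lt m L) by (destruct Hm as [-> | ->]; auto).
      destruct (Hcof m HmL) as [c [Hmc [HcL Hc]]]. exists c.
      split; [eapply le_lt_trans; eauto | split; [exact HcL|]].
      apply (branch_splits_mono b c); auto. apply lt_le_incl. eapply le_lt_trans; eauto.
Qed.

Lemma branch_avoids b : ~ F b x.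
Proof.
  assert (Hs : forall a, fusion_seq x (succ b) (restr x a)) by (intros a; apply branch_fusion_seq).
  assert (Hin := branch_fusion_seq b (succ b)).
  rewrite fusion_seq_succ in Hs. destruct (excluded_middle_informative _); [|contradiction].
  destruct (shrink_spec (fusion_seq x b) (restr x (succ b)) (F b)) as [_ [_ [_ Ha]]];
    auto using fusion_seq_normal_cond.
Qed.

End Branch.

Lemma fusion_tree_cond : cond fusion_tree.
Proof.
  apply is_club_miller_intro.
  - split.
    + exists root. apply fusion_tree_restr.
      exact (cond_root _ (proj1 (fusion_seq_normal_cond _ _))).
    + intros s t Hst Ht. revert t Ht Hst. refine (node_restr_ind _ _). intros x a Ht Hst.
      apply prefix_restr_iff in Hst as [Hl ->]. apply fusion_tree_restr.
      now apply (fusion_seq_of_tree x a).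
  - intros s. revert s. refine (node_restr_ind _ _). intros x a Hs.
    apply fusion_tree_restr in Hs.
    destruct (cond_succ _ _ (proj1 (fusion_seq_normal_cond x a)) Hs) as [g Hg].
    exists (snoc (restr x a) g).
    split; [now apply fusion_tree_snoc | split; [apply prefix_snoc | apply len_snoc_neq]].
  - exact fusion_tree_closed.
  - intros x Hx. apply (club_ext (fun a => splits (fusion_seq x a) (restr x a))).
    + intros a. split; apply club_ext; intros g; rewrite fusion_tree_snoc; tauto.
    + now apply branch_splitting_levels_club.
Qed.

End Fusion.

Lemma nowhere_dense_union (F : K -> (K -> K) -> Prop) :
  (forall a, nowhere_dense K lt (F a)) -> nowhere_dense K lt (fun x => exists a, F a x).
Proof.
  intros HF p Cp. destruct (normal_cond_below p Cp) as [p0 [Hp0 Hsub]].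
  exists (fusion_tree F p0). split; [now apply fusion_tree_cond|]. split.
  - intros s Hs. now apply Hsub, (fusion_tree_sub_p0 F p0).
  - intros x Hx [a Ha]. rewrite branch_iff in Hx. exact (branch_avoids F p0 HF Hp0 x Hx a Ha).
Qed.

End ClubMillerFusion.

Lemma nowhere_dense_mono K lt (X Y : (K -> K) -> Prop) :
  (forall x, X x -> Y x) -> nowhere_dense K lt Y -> nowhere_dense K lt X.
Proof.
  intros HXY HY p Cp. destruct (HY p Cp) as [q [Cq [Hqp Hq]]].
  exists q. split; [exact Cq|]. split; [exact Hqp|]. intros x Hx HXx. exact (Hq x Hx (HXY x HXx)).
Qed.

Theorem mainTheorem6 (K : Type) (lt : K -> K -> Prop)
  (Hwo : is_wellorder K lt) (Hcard : is_cardinal_type K lt)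
  (Hunc : is_uncountable K) (Hreg : is_regular K lt)
  (Hpow : two_lt_kappa_eq_kappa K lt) :
  forall X : (K -> K) -> Prop, nowhere_dense K lt X <-> in_ideal K lt X.
Proof.
  intros X. split.
  - intros HX. exists (fun _ => X). split; [auto|].
    destruct (K_inhabited K Hunc) as [a]. eauto.
  - intros [F [HF HX]]. apply (nowhere_dense_mono K lt X (fun x => exists a, F a x) HX).
    exact (nowhere_dense_union K lt Hwo Hunc Hreg F HF).
Qed.
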